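(* Let $\mathcal{X}$ be a feature space, $p(\boldsymbol{x},y)$ a joint density on $\mathcal{X}\times\{+1,-1\}$ with class priors $\pi_+=p(y=+1)\in(0,1)$, $\pi_-=1-\pi_+$ and class-conditional densities $p_+,p_-$. Let $\ell:\mathbb{R}\times\{+1,-1\}\to\mathbb{R}_+$ be a loss function and $f:\mathcal{X}\to\mathbb{R}$ a classifier with classification risk $$R(f)=\mathbb{E}_{p(\boldsymbol{x},y)}[\ell(f(\boldsymbol{x}),y)]=\pi_+\mathbb{E}_{p_+(\boldsymbol{x})}[\ell(f(\boldsymbol{x}),+1)]+\pi_-\mathbb{E}_{p_-(\boldsymbol{x})}[\ell(f(\boldsymbol{x}),-1)].$$ Define $$\widetilde{p}_+(\boldsymbol{x})=\frac{\pi_+}{\pi_-^2+\pi_+}p_+(\boldsymbol{x})+\frac{\pi_-^2}{\pi_-^2+\pi_+}p_-(\boldsymbol{x}),\qquad \widetilde{p}_-(\boldsymbol{x})=\frac{\pi_+^2}{\pi_+^2+\pi_-}p_+(\boldsymbol{x})+\frac{\pi_-}{\pi_+^2+\pi_-}p_-(\boldsymbol{x}).$$ Then $R(f)=R_{\mathrm{PC}}(f)$, where $$R_{\mathrm{PC}}(f)=\mathbb{E}_{\widetilde{p}_+(\boldsymbol{x})}\big[\ell(f(\boldsymbol{x}),+1)-\pi_+\ell(f(\boldsymbol{x}),-1)\big]+\mathbb{E}_{\widetilde{p}_-(\boldsymbol{x}')}\big[\ell(f(\boldsymbol{x}'),-1)-\pi_-\ell(f(\boldsymbol{x}'),+1)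\big].$$
   Context: $\widetilde{p}_+$ and $\widetilde{p}_-$ are the marginal densities of the first and second components of pairwise comparison data, i.e. pairs $(\boldsymbol{x},\boldsymbol{x}')$ of unlabeled points generated by drawing two labeled points independently from $p(\boldsymbol{x},y)$ and conditioning on their labels lying in $\{(+1,+1),(+1,-1),(-1,-1)\}$. *)

From HB Require Import structures.
From mathcomp Require Import all_boot all_order all_algebra.
From mathcomp Require Import all_classical all_reals all_analysis.
Set Implicit Arguments. Unset Strict Implicit. Unset Printing Implicit Defensive.
Import Order.TTheory GRing.Theory Num.Theory.
Local Open Scope ring_scope.
Local Open Scope classical_set_scope.

(* Labels: [true] stands for y = +1, [false] for y = -1. *)

Section Defs.
Context {d : measure_display} {T : measurableType d} {R : realType}.
Variable mu : {measure set T -> \bar R}.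

Definition is_density (p : T -> R) : Prop :=
  [/\ (forall x, 0 <= p x), measurable_fun setT p &
      (\int[mu]_x (p x)%:E = 1)%E].

Definition expect (p : T -> R) (g : T -> R) : \bar R :=
  (\int[mu]_x (g x * p x)%:E)%E.

Definition risk (pip : R) (pp pm : T -> R) (l : R -> bool -> R) (f : T -> R)
  : \bar R :=
  ((pip%:E) * expect pp (fun x => l (f x) true)
   + ((1 - pip)%R)%:E * expect pm (fun x => l (f x) false))%E.

(* marginal densities of pairwise comparison data *)
Definition ptilde_plus (pip : R) (pp pm : T -> R) (x : T) : R :=
  let pim := 1 - pip in
  pip / (pim ^+ 2 + pip) * pp x + pim ^+ 2 / (pim ^+ 2 + pip) * pm x.

Definition ptilde_minus (pip : R) (pp pm : T -> R) (x : T) : R :=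
  let pim := 1 - pip in
  pip ^+ 2 / (pip ^+ 2 + pim) * pp x + pim / (pip ^+ 2 + pim) * pm x.

Definition risk_PC (pip : R) (pp pm : T -> R) (l : R -> bool -> R)
  (f : T -> R) : \bar R :=
  (expect (ptilde_plus pip pp pm)
     (fun x => (l (f x) true - pip * l (f x) false)%R)
   + expect (ptilde_minus pip pp pm)
     (fun x => (l (f x) false - (1 - pip) * l (f x) true)%R))%E.

End Defs.

From HB Require Import structures.
From mathcomp Require Import all_boot all_order all_algebra.
From mathcomp Require Import all_classical all_reals all_analysis.
From mathcomp Require Import ring lra.
Import Order.TTheory GRing.Theory Num.Theory.
Local Open Scope ring_scope.
Local Open Scope classical_set_scope.

(* The two normalising constants of the pairwise-comparison densities agree,
   c = pi-^2 + pi+ = pi+^2 + pi- = 1 - pi+ + pi+^2 > 0.  With this common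
   denominator, the two integrands of R_PC add up pointwise to
   pi+ l(f x, +1) p+(x) + pi- l(f x, -1) p-(x), the integrand of R, and
   linearity of the integral concludes.  Only the integrability of the four
   products l(f x, y) p(x) is used: the identity holds for every real pi+ and
   does not need p+, p- to be densities. *)

Section pairwise_comparison_algebra.
Variable R : realFieldType.

Lemma pc_denominator_gt0 (a : R) : 0 < (1 - a) ^+ 2 + a.
Proof. nra. Qed.

Lemma pc_denominatorC (a : R) : a ^+ 2 + (1 - a) = (1 - a) ^+ 2 + a.
Proof. ring. Qed.

End pairwise_comparison_algebra.

Section pairwise_comparison_integrals.
Context {d : measure_display} {T : measurableType d} {R : realType}.
Variable mu : {measure set T -> \bar R}.

Lemma ptilde_integrand_sum (a : R) (pp pm : T -> R) (u v : R) (x : T) :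
  (u - a * v) * ptilde_plus a pp pm x
  + (v - (1 - a) * u) * ptilde_minus a pp pm x
  = a * (u * pp x) + (1 - a) * (v * pm x).
Proof.
rewrite /ptilde_plus /ptilde_minus pc_denominatorC.
by field; rewrite lt0r_neq0 // pc_denominator_gt0.
Qed.

Variables (D : set T) (mD : measurable D).

Lemma integrable_lincomb (F G : T -> R) (a b : R) :
  mu.-integrable D (fun x => (F x)%:E) ->
  mu.-integrable D (fun x => (G x)%:E) ->
  mu.-integrable D (fun x => (a * F x + b * G x)%:E).
Proof.
move=> iF iG.
apply: (eq_integrable mD _ _ _ (integrableD mD (integrableZl mD a iF)
  (integrableZl mD b iG))) => x _.
by rewrite /= EFinD !EFinM.
Qed.

Lemma integral_lincomb (F G : T -> R) (a b : R) :
  mu.-integrable D (fun x => (F x)%:E) ->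
  mu.-integrable D (fun x => (G x)%:E) ->
  (\int[mu]_(x in D) (a * F x + b * G x)%:E
   = a%:E * \int[mu]_(x in D) (F x)%:E + b%:E * \int[mu]_(x in D) (G x)%:E)%E.
Proof.
move=> iF iG.
under eq_integral do rewrite EFinD !EFinM.
rewrite (integralD mD) ?integralZl //; exact: integrableZl.
Qed.

Lemma integrable_subr_mul_lincomb (g h p q : T -> R) (a b c : R) :
  mu.-integrable D (fun x => (g x * p x)%:E) ->
  mu.-integrable D (fun x => (g x * q x)%:E) ->
  mu.-integrable D (fun x => (h x * p x)%:E) ->
  mu.-integrable D (fun x => (h x * q x)%:E) ->
  mu.-integrable D (fun x => ((g x - a * h x) * (b * p x + c * q x))%:E).
Proof.
move=> igp igq ihp ihq.
apply: (eq_integrable mD _ _ _ (integrable_lincomb _ _ b c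
  (integrable_lincomb _ _ 1 (- a) igp ihp)
  (integrable_lincomb _ _ 1 (- a) igq ihq))).
by move=> x _; congr EFin; ring.
Qed.

End pairwise_comparison_integrals.

Theorem theorem3 (d : measure_display) (T : measurableType d) (R : realType)
  (mu : {measure set T -> \bar R}) (pip : R) (pp pm : T -> R)
  (l : R -> bool -> R) (f : T -> R) :
  0 < pip < 1 ->
  is_density mu pp -> is_density mu pm ->
  (forall z y, 0 <= l z y) ->
  (forall y, measurable_fun setT (fun x => l (f x) y)) ->
  (forall y, mu.-integrable setT (fun x => (l (f x) y * pp x)%:E)) ->
  (forall y, mu.-integrable setT (fun x => (l (f x) y * pm x)%:E)) ->
  risk mu pip pp pm l f = risk_PC mu pip pp pm l f.
Proof.
move=> _ _ _ _ _ ip im.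
have iPC y c a b : mu.-integrable setT
    (fun x => ((l (f x) y - c * l (f x) (~~ y)) * (a * pp x + b * pm x))%:E).
  exact: integrable_subr_mul_lincomb.
rewrite /risk_PC /expect -integralD //; last 2 first.
- exact: (iPC true).
- exact: (iPC false).
under eq_integral do rewrite -EFinD ptilde_integrand_sum.
by rewrite integral_lincomb.
Qed.
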